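(* Let $q=2^f$ with $f\ge4$, let $q_0<q$ be a power of $2$ with $\gcd(q-1,q_0^2-1)=1$, and let $u\in\mathscr{U}_{q,q_0}$. The only automorphism of $\Gamma_u$ that fixes every vertex of $\{\varepsilon\}\cup\Omega_\infty$ is the identity.
   Context: For $a,c\in\mathbb{F}_q$ let $\Phi_{a,c}=\begin{bmatrix}1&0&0\\ a&1&0\\ c&a^{q_0}&1\end{bmatrix}$, $K=\{\Phi_{a,c}: a,c\in\mathbb{F}_q\}\le GL(3,\mathbb{F}_q)$ with identity $\varepsilon=\Phi_{0,0}$; $\Omega_\infty=\{\Phi_{0,c}:c\in\mathbb{F}_q^*\}$ and for $v\in\mathbb{F}_q$, $\Omega_v=\{\Phi_{a,va^{q_0+1}}: a\in\mathbb{F}_q^*\}$. $\Gamma_u=\mathrm{Cay}(K,\Omega_u\cup\Omega_{u+1})$ is the graph with vertex set $K$, $x,y$ adjacent iff $xy^{-1}\in\Omega_u\cup\Omega_{u+1}$. $\mathscr{U}_{q,q_0}$ is the set of $u\in\mathbb{F}_q$ such that (U1) $u=(1+\eta^{q_0})/(\eta+\eta^{q_0})$ for some primitive element $\eta$ of $\mathbb{F}_q$, and (U2) $X^{q_0+1}+uX^{q_0}+(u+1)X+1$ has no roots in $\mathbb{F}_q$. *)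

From HB Require Import structures.
From mathcomp Require Import all_boot all_order all_fingroup all_algebra all_field.
Set Implicit Arguments. Unset Strict Implicit. Unset Printing Implicit Defensive.
Import GRing.Theory.
Local Open Scope ring_scope.

Section Suzuki.
Variables (F : finFieldType) (q0 : nat).

Definition Phi (a c : F) : 'M[F]_3 :=
  \matrix_(i < 3, j < 3)
    (if (i == j :> nat) then 1
     else if (i == 1%N :> nat) && (j == 0%N :> nat) then a
     else if (i == 2%N :> nat) && (j == 0%N :> nat) then c
     else if (i == 2%N :> nat) && (j == 1%N :> nat) then a ^+ q0
     else 0).

Definition Kset : {set 'M[F]_3} := [set Phi p.1 p.2 | p : F * F].

Definition eps : 'M[F]_3 := Phi 0 0.

Definition Omega_inf : {set 'M[F]_3} := [set Phi 0 c | c in [set c : F | c != 0]].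

Definition Omega (v : F) : {set 'M[F]_3} :=
  [set Phi a (v * a ^+ q0.+1) | a in [set a : F | a != 0]].

Definition Kvert := {x : 'M[F]_3 | x \in Kset}.

(* adjacency in Cay(K, Omega_u U Omega_{u+1}): x y^{-1} in the connection set *)
Definition Gadj (u : F) (x y : Kvert) : bool :=
  (val x *m invmx (val y)) \in (Omega u :|: Omega (u + 1)).

Definition is_graph_aut (u : F) (g : {perm Kvert}) : Prop :=
  forall x y : Kvert, Gadj u (g x) (g y) = Gadj u x y.

Definition inU (u : F) : Prop :=
  (exists eta : F, (#|F|.-1).-primitive_root eta /\
     u = (1 + eta ^+ q0) / (eta + eta ^+ q0)) /\
  (forall x : F, ~~ root (('X : {poly F}) ^+ q0.+1 + u *: 'X ^+ q0 + (u + 1) *: 'X + 1) x).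

End Suzuki.

From HB Require Import structures.
From mathcomp Require Import all_boot all_order all_fingroup all_algebra all_field.
From mathcomp Require Import cyclic ring.
Set Implicit Arguments. Unset Strict Implicit. Unset Printing Implicit Defensive.
Import GRing.Theory.
Local Open Scope ring_scope.

(* In characteristic 2 with q0 = 2^e, Phi a c * Phi b d = Phi (a + b) (c + d + a^q0 b)
   and (Phi a c)^-1 = Phi a (c + a^(q0+1)).  A vertex Phi a c with a <> 0 has exactly
   two neighbours on the fixed axis {Phi 0 d}, namely Phi 0 (c + u a^(q0+1)) and
   Phi 0 (c + (u+1) a^(q0+1)); as a |-> a^(q0+1) is injective (gcd(q-1, q0+1) = 1),
   an automorphism fixing the axis sends every x to x or x^-1.  If g x = x^-1, pick
   y = Phi b d with b outside {0, a}, adjacent to x through Omega_u.  Whichever of y,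
   y^-1 is g y, its adjacency to x^-1 forces a^(q0+1) to be 0, (a+b)^(q0+1) or
   b^(q0+1), or forces a^q0 b = a b^q0; all are excluded by the injectivity of
   a |-> a^(q0+1) and a |-> a^(q0-1) (gcd(q-1, q0-1) = 1). *)

Lemma expf_coprime_inj (F : finFieldType) n (x y : F) :
  coprime #|F|.-1 n -> x != 0 -> y != 0 -> x ^+ n = y ^+ n -> x = y.
Proof.
rewrite -card_finField_unit -!unitfE => co ux uy exy.
pose X := FinRing.unit F ux; pose Y := FinRing.unit F uy.
suff: X = Y by move/(congr1 val).
apply: (can_in_inj (expgK co)); rewrite ?inE //.
by apply/val_inj; rewrite /= !FinRing.val_unitX /= exy.
Qed.

Lemma predn_sqr n : (n ^ 2).-1 = (n.-1 * n.+1)%N.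
Proof. by rewrite -subn1 -{2}(exp1n 2) subn_sqr subn1 addn1. Qed.

Lemma exists_neq2 (T : finType) (x y : T) :
  (2 < #|T|)%N -> exists z, z != x /\ z != y.
Proof.
move=> T2; have : ~: [set x; y] != set0.
  rewrite -card_gt0 -(leq_add2l #|[set x; y]|) addn1 cardsC.
  by apply: leq_trans _ T2; rewrite ltnS cards2; case: (x != y).
by case/set0Pn => z; rewrite !inE negb_or => /andP [zx zy]; exists z.
Qed.

Lemma addr_eq_id (V : zmodType) (x y : V) : (x + y == x) = (y == 0).
Proof. by rewrite -[X in _ == X]addr0 (inj_eq (addrI x)). Qed.

Section PhiCoordinates.
Variables (F : finFieldType) (q0 : nat).

Lemma Phi_inj (a b c d : F) : Phi q0 a c = Phi q0 b d -> a = b /\ c = d.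
Proof.
move=> E; split.
  by have := congr1 (fun M : 'M_3 => M (@Ordinal 3 1 isT) (@Ordinal 3 0 isT)) E; rewrite !mxE.
by have := congr1 (fun M : 'M_3 => M (@Ordinal 3 2 isT) (@Ordinal 3 0 isT)) E; rewrite !mxE.
Qed.

Lemma mem_Omega (v a c : F) :
  (Phi q0 a c \in Omega q0 v) = (a != 0) && (c == v * a ^+ q0.+1).
Proof.
apply/imsetP/andP => [[a' + /Phi_inj [-> ->]]|[a0 /eqP ->]]; first by rewrite inE.
by exists a; rewrite ?inE.
Qed.

Lemma mem_Omega_inf (a c : F) :
  (Phi q0 a c \in Omega_inf F q0) = (a == 0) && (c != 0).
Proof.
apply/imsetP/andP => [[c' + /Phi_inj [-> ->]]|[/eqP -> c0]]; first by rewrite inE.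
by exists c; rewrite ?inE.
Qed.

Lemma Phi_in_Kset (a c : F) : Phi q0 a c \in Kset F q0.
Proof. by apply/imsetP; exists (a, c). Qed.

Definition vertex (a c : F) : Kvert F q0 := exist _ (Phi q0 a c) (Phi_in_Kset a c).

Lemma vertexP (x : Kvert F q0) : exists a c, x = vertex a c.
Proof.
case: x => M KM; have /imsetP [[a c] _ EM] := KM.
by exists a, c; apply: val_inj.
Qed.

Lemma vertex_axis (d : F) :
  (val (vertex 0 d) == eps F q0) || (val (vertex 0 d) \in Omega_inf F q0).
Proof. by rewrite /= /eps mem_Omega_inf; case: (eqVneq d 0) => [->|]; rewrite ?eqxx ?orbT. Qed.

End PhiCoordinates.

Section CharacteristicTwo.
Variables (F : finFieldType) (e : nat).
Hypothesis charF2 : 2 \in [pchar F].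
Local Notation q0 := (2 ^ e)%N.
Local Notation vertex := (vertex q0).

Let two0 : 1 + 1 = 0 :> F := addrr_pchar2 charF2 1.

Lemma addr_eq0_pchar2 (x y : F) : (x + y == 0) = (x == y).
Proof. by rewrite addr_eq0 (oppr_pchar2 charF2). Qed.

Lemma exprD_q0 (a b : F) : (a + b) ^+ q0 = a ^+ q0 + b ^+ q0.
Proof. by rewrite exprDn_pchar // (eq_pnat _ (pcharf_eq charF2)) pnatX pnat_id. Qed.

Lemma exprS_q0D (a b : F) :
  (a + b) ^+ q0.+1 = a ^+ q0.+1 + b ^+ q0.+1 + (a ^+ q0 * b + a * b ^+ q0).
Proof. by rewrite exprSr exprD_q0 !exprSr; ring. Qed.

Lemma Phi_mul (a b c d : F) :
  Phi q0 a c *m Phi q0 b d = Phi q0 (a + b) (c + d + a ^+ q0 * b).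
Proof.
apply/matrixP => i j; rewrite !mxE !big_ord_recr big_ord0 /= !mxE /=.
case: i => [[|[|[|?]]] ?]; case: j => [[|[|[|?]]] ?] //=;
  rewrite ?exprD_q0 //; ring: two0.
Qed.

Lemma Phi00 : Phi q0 (0 : F) 0 = 1%:M.
Proof.
apply/matrixP => i j; rewrite !mxE expr0n expn_eq0 /=.
by case: i => [[|[|[|?]]] ?]; case: j => [[|[|[|?]]] ?].
Qed.

Lemma Phi_inv (a c : F) : invmx (Phi q0 a c) = Phi q0 a (c + a ^+ q0.+1).
Proof.
have E : Phi q0 a c *m Phi q0 a (c + a ^+ q0.+1) = 1%:M.
  by rewrite Phi_mul -Phi00 exprS; congr Phi; ring: two0.
by rewrite -[RHS](mulKmx (proj1 (mulmx1_unit E))) E mulmx1.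
Qed.

Lemma mem_Omega_pair (u s z : F) :
  (Phi q0 s z \in Omega q0 u :|: Omega q0 (u + 1)) =
  (s != 0) && (z + u * s ^+ q0.+1 \in [:: 0; s ^+ q0.+1]).
Proof.
rewrite in_setU !mem_Omega -andb_orr; congr (_ && _); rewrite !inE mulrDl mul1r.
by rewrite -!(addr_eq0_pchar2 z) -(addr_eq0_pchar2 _ (s ^+ q0.+1)) addrA.
Qed.

Lemma Gadj_vertex (u a c b d : F) :
  Gadj u (vertex a c) (vertex b d) = (a + b != 0) &&
    (c + d + b ^+ q0.+1 + a ^+ q0 * b + u * (a + b) ^+ q0.+1 \in [:: 0; (a + b) ^+ q0.+1]).
Proof. by rewrite /Gadj /= Phi_inv Phi_mul mem_Omega_pair addrA. Qed.

Lemma Gadj_vertex_axis (u a c d : F) :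
  Gadj u (vertex a c) (vertex 0 d) =
    (a != 0) && (c + d + u * a ^+ q0.+1 \in [:: 0; a ^+ q0.+1]).
Proof. by rewrite Gadj_vertex expr0n mulr0 !addr0. Qed.

Section Coprime.
Hypotheses (co_plus : coprime #|F|.-1 q0.+1) (co_minus : coprime #|F|.-1 q0.-1).

Lemma exprS_q0_inj : injective (fun a : F => a ^+ q0.+1).
Proof.
move=> a b /= Eab; have [a0|a0] := eqVneq a 0.
  by move: Eab; rewrite a0 expr0n => /esym/eqP; rewrite expf_eq0 => /andP [_ /eqP].
have b0 : b != 0.
  by apply: contraTneq (expf_neq0 q0.+1 a0) => b0; rewrite Eab b0 expr0n /= eqxx.
exact: (expf_coprime_inj co_plus a0 b0 Eab).
Qed.

Lemma cross_q0_eq0 (a b : F) :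
  a != 0 -> b != 0 -> a ^+ q0 * b + a * b ^+ q0 = 0 -> a = b.
Proof.
move=> a0 b0 /eqP; rewrite addr_eq0_pchar2 => /eqP E.
apply: (expf_coprime_inj co_minus a0 b0); apply: (mulfI a0); apply: (mulIf b0).
by rewrite -!exprS -mulrA -exprSr !prednK ?expn_gt0 // E mulrC.
Qed.

Section Automorphism.
Variables (u : F) (g : {perm Kvert F q0}).
Hypotheses (g_aut : is_graph_aut u g) (g_fix_axis : forall d, g (vertex 0 d) = vertex 0 d).

Lemma aut_fix_or_inv (a c : F) : a != 0 ->
  g (vertex a c) = vertex a c \/ g (vertex a c) = vertex a (c + a ^+ q0.+1).
Proof.
move=> a0; have [a2 [c2 gx]] := vertexP (g (vertex a c)).
set t := a ^+ q0.+1; set t2 := a2 ^+ q0.+1; set delta := c2 + c + u * t + u * t2.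
have t0 : t != 0 by rewrite expf_neq0.
have adj w : (a2 != 0) && (delta + w \in [:: 0; t2]) = (w \in [:: 0; t]).
  have := g_aut (vertex a c) (vertex 0 (c + u * t + w)).
  rewrite gx g_fix_axis !Gadj_vertex_axis a0 -/t -/t2 /=.
  have -> : c2 + (c + u * t + w) + u * t2 = delta + w by rewrite /delta; ring.
  by have -> : c + (c + u * t + w) + u * t = w by ring: two0.
have := adj 0; rewrite addr0 !inE eqxx /= => /andP [a20 delta_in].
have t2t : t2 = t.
  have := adj t; rewrite !inE eqxx orbT a20 /=.
  case/orP: delta_in => /eqP ->; rewrite ?add0r => /orP [] /eqP.
  - by move=> t_0; rewrite t_0 eqxx in t0.
  - by move->.
  - by move/eqP; rewrite addr_eq0_pchar2 => /eqP.
  - by move/eqP; rewrite addr_eq_id (negPf t0).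
have a2a : a2 = a by apply: exprS_q0_inj; rewrite -/t -/t2 t2t.
have : (c2 + c == 0) || (c2 + c == t).
  by move: delta_in; rewrite /delta t2t -addrA (addrr_pchar2 charF2) addr0.
rewrite gx a2a => /orP [] /eqP c2c; [left | right].
  by apply: val_inj; move/eqP: c2c; rewrite /= addr_eq0_pchar2 => /eqP ->.
by apply: val_inj; rewrite /= -c2c [c2 + c]addrC (addKr_pchar2 charF2).
Qed.

Lemma aut_not_inv (a c : F) : (2 < #|F|)%N -> a != 0 ->
  g (vertex a c) != vertex a (c + a ^+ q0.+1).
Proof.
move=> F2 a0; apply/eqP => gx.
have [b [b0 ba]] := exists_neq2 0 a F2.
have s0 : a + b != 0 by rewrite addr_eq0_pchar2 eq_sym.
pose d := c + b ^+ q0.+1 + a ^+ q0 * b + u * (a + b) ^+ q0.+1.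
have : Gadj u (vertex a c) (vertex b d).
  by rewrite Gadj_vertex s0 inE /d; apply/orP; left; apply/eqP; ring: two0.
rewrite -g_aut gx; have [gy|gy] := aut_fix_or_inv d b0; rewrite gy Gadj_vertex s0 !inE /=.
- have -> : c + a ^+ q0.+1 + d + b ^+ q0.+1 + a ^+ q0 * b + u * (a + b) ^+ q0.+1
            = a ^+ q0.+1.
    by rewrite /d; ring: two0.
  case/orP => /eqP; first by apply/eqP; rewrite expf_neq0.
  by move/exprS_q0_inj/eqP; rewrite eq_sym addr_eq_id (negPf b0).
- have -> : c + a ^+ q0.+1 + (d + b ^+ q0.+1) + b ^+ q0.+1 + a ^+ q0 * b
            + u * (a + b) ^+ q0.+1 = a ^+ q0.+1 + b ^+ q0.+1.
    (* [ring] uses 1 + 1 = 0 only to cancel even coefficients, hence the difference. *)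
    by apply: subr0_eq; rewrite /d; ring: two0.
  rewrite exprS_q0D addr_eq0_pchar2 [X in _ || X]eq_sym addr_eq_id.
  case/orP => /eqP; first by move/exprS_q0_inj/esym/eqP; rewrite (negPf ba).
  by move/(cross_q0_eq0 a0 b0)/esym/eqP; rewrite (negPf ba).
Qed.

Lemma aut_eq1 : (2 < #|F|)%N -> g = 1%g.
Proof.
move=> F2; apply/permP => x; rewrite perm1; have [a [c ->]] := vertexP x.
have [->|a0] := eqVneq a 0; first exact: g_fix_axis.
have [//|gx] := aut_fix_or_inv c a0.
by move: (aut_not_inv c F2 a0); rewrite gx eqxx.
Qed.

End Automorphism.
End Coprime.
End CharacteristicTwo.

Theorem lemma8p2 (F : finFieldType) (f e : nat) (u : F) :
  (4 <= f)%N -> #|F| = (2 ^ f)%N ->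
  (2 ^ e < 2 ^ f)%N -> coprime (2 ^ f).-1 ((2 ^ e) ^ 2).-1 ->
  inU (2 ^ e) u ->
  forall g : {perm Kvert F (2 ^ e)},
    is_graph_aut u g ->
    (forall x : Kvert F (2 ^ e),
        (val x == eps F (2 ^ e)) || (val x \in Omega_inf F (2 ^ e)) -> g x = x) ->
    g = 1%g.
Proof.
move=> f4 cardF _ co _ g g_aut g_fix.
have charF2 : 2 \in [pchar F] := card_finPcharP cardF (isT : prime 2).
have /andP [co_plus co_minus] : coprime #|F|.-1 (2 ^ e).+1 && coprime #|F|.-1 (2 ^ e).-1.
  by rewrite -coprimeMr cardF mulnC -predn_sqr.
have F2 : (2 < #|F|)%N by rewrite cardF -{1}(expn1 2) ltn_exp2l // (leq_trans _ f4).
apply: (aut_eq1 charF2 co_plus co_minus g_aut _ F2) => d.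
exact/g_fix/vertex_axis.
Qed.
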